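(* If $\mathcal{D}$ is a fibrant double category, then the functor $\mathcal{D}_1^{\bullet}\to\mathcal{D}_0$, sending a horizontal endo-1-cell $M\colon A\nrightarrow A$ to $A$ and a morphism of $\mathcal{D}_1^{\bullet}$ to its vertical source (equal to its target), is a bifibration (both a fibration and an opfibration).
   Context: A (pseudo) double category $\mathcal{D}$ has a category $\mathcal{D}_0$ of objects and vertical 1-cells, a category $\mathcal{D}_1$ of horizontal 1-cells $M\colon A\nrightarrow B$ and 2-morphisms (squares with vertical source $f$ and target $g$), source/target functors, units $1_A$, and a horizontal composition $\odot$ associative and unital up to coherent globular isomorphisms. $\mathcal{D}_1^{\bullet}$ is the (non-full) subcategory of $\mathcal{D}_1$ whose objects are horizontal endo-1-cells $M\colon A\nrightarrow A$ and whose morphisms are 2-morphisms with equal vertical source and target $f\colon A\to B$. $\mathcal{D}$ is fibrant if every vertical 1-cell $f\colon A\to B$ has a companion $\hat f\colon A\nrightarrow B$, i.e. 2-morphisms $p_1\colon\hat f\Rightarrow1_B$ (vertical source $f$, target $\mathrm{id}_B$) and $p_2\colon1_A\Rightarrow\hat f$ (source $\mathrm{id}_A$, target $f$) with $p_1p_2=1_f$ and $p_1\odot p_2\cong1_{\hat f}$, and a conjoint $\check f\colon B\nrightarrow A$, i.e. $q_1\colon\check f\Rightarrow1_B$ (source $\mathrm{id}_B$, target $f$) and $q_2\colon1_A\Rightarrow\check f$ (source $f$, target $\mathrm{id}_A$) with $q_1q_2=1_f$ and $q_2\odot q_1\cong1_{\check f}$. *)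

From Stdlib Require Import ProofIrrelevance.

Unset Implicit Arguments.
Set Universe Polymorphism.

Record Category := {
  obj : Type;
  hom : obj -> obj -> Type;
  idm : forall x, hom x x;
  comp : forall {x y z}, hom x y -> hom y z -> hom x z;
  comp_id_l : forall x y (f : hom x y), comp (idm x) f = f;
  comp_id_r : forall x y (f : hom x y), comp f (idm y) = f;
  comp_assoc : forall x y z w (f : hom x y) (g : hom y z) (h : hom z w),
      comp (comp f g) h = comp f (comp g h)
}.
Arguments idm {c} x.
Arguments comp {c x y z} _ _.

Record Functor (E B : Category) := {
  Fob : obj E -> obj B;
  Fhom : forall {x y}, hom E x y -> hom B (Fob x) (Fob y);
  Fhom_id : forall x, Fhom (idm x) = idm (Fob x);
  Fhom_comp : forall x y z (f : hom E x y) (g : hom E y z),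
      Fhom (comp f g) = comp (Fhom f) (Fhom g)
}.
Arguments Fob {E B} f0 x.
Arguments Fhom {E B} f0 {x y} _.

Definition is_cartesian {E B} (P : Functor E B) {x y : obj E} (s : hom E x y) : Prop :=
  forall (z : obj E) (t : hom E z y) (g : hom B (Fob P z) (Fob P x)),
    comp g (Fhom P s) = Fhom P t ->
    exists! th : hom E z x, Fhom P th = g /\ comp th s = t.

Definition is_opcartesian {E B} (P : Functor E B) {x y : obj E} (s : hom E x y) : Prop :=
  forall (z : obj E) (t : hom E x z) (g : hom B (Fob P y) (Fob P z)),
    comp (Fhom P s) g = Fhom P t ->
    exists! th : hom E y z, Fhom P th = g /\ comp s th = t.

Definition is_fibration {E B} (P : Functor E B) : Prop :=
  forall (y : obj E) (a : obj B) (f : hom B a (Fob P y)),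
    exists (x : obj E) (s : hom E x y) (e : Fob P x = a),
      is_cartesian P s /\
      match e in _ = a' return hom B a' (Fob P y) with eq_refl => Fhom P s end = f.

Definition is_opfibration {E B} (P : Functor E B) : Prop :=
  forall (x : obj E) (b : obj B) (f : hom B (Fob P x) b),
    exists (y : obj E) (s : hom E x y) (e : Fob P y = b),
      is_opcartesian P s /\
      match e in _ = b' return hom B (Fob P x) b' with eq_refl => Fhom P s end = f.

Definition is_bifibration {E B} (P : Functor E B) : Prop :=
  is_fibration P /\ is_opfibration P.

(* D0 : category of objects and vertical 1-cells.
   D1 : horizontal 1-cells  HC A B  (M : A -|-> B) and 2-morphisms  Sq M N,
        written out as a category with source / target functors to D0
        (sq_src = vertical source, sq_tgt = vertical target).
   Vertical composition of squares sq_comp is diagrammatic. *)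
Record PDC := {
  D0 : Category;
  HC : obj D0 -> obj D0 -> Type;
  Sq : forall {A B C D : obj D0}, HC A B -> HC C D -> Type;
  sq_src : forall {A B C D} {M : HC A B} {N : HC C D}, Sq M N -> hom D0 A C;
  sq_tgt : forall {A B C D} {M : HC A B} {N : HC C D}, Sq M N -> hom D0 B D;
  sq_id : forall {A B} (M : HC A B), Sq M M;
  sq_comp : forall {A B C D E F} {M : HC A B} {N : HC C D} {P : HC E F},
      Sq M N -> Sq N P -> Sq M P;
  sq_comp_id_l : forall A B C D (M : HC A B) (N : HC C D) (a : Sq M N),
      sq_comp (sq_id M) a = a;
  sq_comp_id_r : forall A B C D (M : HC A B) (N : HC C D) (a : Sq M N),
      sq_comp a (sq_id N) = a;
  sq_comp_assoc : forall A B C D E F G H (M : HC A B) (N : HC C D) (P : HC E F)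
      (Q : HC G H) (a : Sq M N) (b : Sq N P) (c : Sq P Q),
      sq_comp (sq_comp a b) c = sq_comp a (sq_comp b c);
  sq_src_id : forall A B (M : HC A B), sq_src (sq_id M) = idm A;
  sq_tgt_id : forall A B (M : HC A B), sq_tgt (sq_id M) = idm B;
  sq_src_comp : forall A B C D E F (M : HC A B) (N : HC C D) (P : HC E F)
      (a : Sq M N) (b : Sq N P), sq_src (sq_comp a b) = comp (sq_src a) (sq_src b);
  sq_tgt_comp : forall A B C D E F (M : HC A B) (N : HC C D) (P : HC E F)
      (a : Sq M N) (b : Sq N P), sq_tgt (sq_comp a b) = comp (sq_tgt a) (sq_tgt b);
  hunit : forall A, HC A A;
  hunit_sq : forall {A C} (f : hom D0 A C), Sq (hunit A) (hunit C);
  hunit_sq_src : forall A C (f : hom D0 A C), sq_src (hunit_sq f) = f;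
  hunit_sq_tgt : forall A C (f : hom D0 A C), sq_tgt (hunit_sq f) = f;
  hunit_sq_id : forall A, hunit_sq (idm A) = sq_id (hunit A);
  hunit_sq_comp : forall A B C (f : hom D0 A B) (g : hom D0 B C),
      hunit_sq (comp f g) = sq_comp (hunit_sq f) (hunit_sq g);
  hcomp : forall {A B C}, HC A B -> HC B C -> HC A C;
  hcomp_sq : forall {A B C A' B' C'} {M : HC A B} {N : HC B C}
      {M' : HC A' B'} {N' : HC B' C'} (a : Sq M M') (b : Sq N N'),
      sq_tgt a = sq_src b -> Sq (hcomp M N) (hcomp M' N');
  hcomp_sq_src : forall A B C A' B' C' (M : HC A B) (N : HC B C)
      (M' : HC A' B') (N' : HC B' C') (a : Sq M M') (b : Sq N N') (e : sq_tgt a = sq_src b),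
      sq_src (hcomp_sq a b e) = sq_src a;
  hcomp_sq_tgt : forall A B C A' B' C' (M : HC A B) (N : HC B C)
      (M' : HC A' B') (N' : HC B' C') (a : Sq M M') (b : Sq N N') (e : sq_tgt a = sq_src b),
      sq_tgt (hcomp_sq a b e) = sq_tgt b;
  hcomp_sq_id : forall A B C (M : HC A B) (N : HC B C)
      (e : sq_tgt (sq_id M) = sq_src (sq_id N)),
      hcomp_sq (sq_id M) (sq_id N) e = sq_id (hcomp M N);
  hcomp_sq_comp : forall A B C A' B' C' A'' B'' C''
      (M : HC A B) (N : HC B C) (M' : HC A' B') (N' : HC B' C')
      (M'' : HC A'' B'') (N'' : HC B'' C'')
      (a : Sq M M') (a' : Sq M' M'') (b : Sq N N') (b' : Sq N' N'')
      (e : sq_tgt a = sq_src b) (e' : sq_tgt a' = sq_src b')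
      (e'' : sq_tgt (sq_comp a a') = sq_src (sq_comp b b')),
      hcomp_sq (sq_comp a a') (sq_comp b b') e''
      = sq_comp (hcomp_sq a b e) (hcomp_sq a' b' e');
  assoc : forall {A B C D} (M : HC A B) (N : HC B C) (P : HC C D),
      Sq (hcomp (hcomp M N) P) (hcomp M (hcomp N P));
  assoc_inv : forall {A B C D} (M : HC A B) (N : HC B C) (P : HC C D),
      Sq (hcomp M (hcomp N P)) (hcomp (hcomp M N) P);
  assoc_src : forall A B C D (M : HC A B) (N : HC B C) (P : HC C D),
      sq_src (assoc M N P) = idm A;
  assoc_tgt : forall A B C D (M : HC A B) (N : HC B C) (P : HC C D),
      sq_tgt (assoc M N P) = idm D;
  assoc_inv_src : forall A B C D (M : HC A B) (N : HC B C) (P : HC C D),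
      sq_src (assoc_inv M N P) = idm A;
  assoc_inv_tgt : forall A B C D (M : HC A B) (N : HC B C) (P : HC C D),
      sq_tgt (assoc_inv M N P) = idm D;
  assoc_iso1 : forall A B C D (M : HC A B) (N : HC B C) (P : HC C D),
      sq_comp (assoc M N P) (assoc_inv M N P) = sq_id _;
  assoc_iso2 : forall A B C D (M : HC A B) (N : HC B C) (P : HC C D),
      sq_comp (assoc_inv M N P) (assoc M N P) = sq_id _;
  lunit : forall {A B} (M : HC A B), Sq (hcomp (hunit A) M) M;
  lunit_inv : forall {A B} (M : HC A B), Sq M (hcomp (hunit A) M);
  runit : forall {A B} (M : HC A B), Sq (hcomp M (hunit B)) M;
  runit_inv : forall {A B} (M : HC A B), Sq M (hcomp M (hunit B));
  lunit_src : forall A B (M : HC A B), sq_src (lunit M) = idm A;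
  lunit_tgt : forall A B (M : HC A B), sq_tgt (lunit M) = idm B;
  lunit_inv_src : forall A B (M : HC A B), sq_src (lunit_inv M) = idm A;
  lunit_inv_tgt : forall A B (M : HC A B), sq_tgt (lunit_inv M) = idm B;
  runit_src : forall A B (M : HC A B), sq_src (runit M) = idm A;
  runit_tgt : forall A B (M : HC A B), sq_tgt (runit M) = idm B;
  runit_inv_src : forall A B (M : HC A B), sq_src (runit_inv M) = idm A;
  runit_inv_tgt : forall A B (M : HC A B), sq_tgt (runit_inv M) = idm B;
  lunit_iso1 : forall A B (M : HC A B), sq_comp (lunit M) (lunit_inv M) = sq_id _;
  lunit_iso2 : forall A B (M : HC A B), sq_comp (lunit_inv M) (lunit M) = sq_id _;
  runit_iso1 : forall A B (M : HC A B), sq_comp (runit M) (runit_inv M) = sq_id _;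
  runit_iso2 : forall A B (M : HC A B), sq_comp (runit_inv M) (runit M) = sq_id _;
  assoc_nat : forall A B C D A' B' C' D'
      (M : HC A B) (N : HC B C) (P : HC C D)
      (M' : HC A' B') (N' : HC B' C') (P' : HC C' D')
      (a : Sq M M') (b : Sq N N') (c : Sq P P')
      (e1 : sq_tgt a = sq_src b) (e2 : sq_tgt (hcomp_sq a b e1) = sq_src c)
      (e3 : sq_tgt b = sq_src c) (e4 : sq_tgt a = sq_src (hcomp_sq b c e3)),
      sq_comp (hcomp_sq (hcomp_sq a b e1) c e2) (assoc M' N' P')
      = sq_comp (assoc M N P) (hcomp_sq a (hcomp_sq b c e3) e4);
  lunit_nat : forall A B A' B' (M : HC A B) (M' : HC A' B') (a : Sq M M')
      (e : sq_tgt (hunit_sq (sq_src a)) = sq_src a),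
      sq_comp (hcomp_sq (hunit_sq (sq_src a)) a e) (lunit M') = sq_comp (lunit M) a;
  runit_nat : forall A B A' B' (M : HC A B) (M' : HC A' B') (a : Sq M M')
      (e : sq_tgt a = sq_src (hunit_sq (sq_tgt a))),
      sq_comp (hcomp_sq a (hunit_sq (sq_tgt a)) e) (runit M') = sq_comp (runit M) a;
  pentagon : forall A B C D E (M : HC A B) (N : HC B C) (P : HC C D) (Q : HC D E)
      (e1 : sq_tgt (assoc M N P) = sq_src (sq_id Q))
      (e2 : sq_tgt (sq_id M) = sq_src (assoc N P Q)),
      sq_comp (assoc (hcomp M N) P Q) (assoc M N (hcomp P Q))
      = sq_comp (hcomp_sq (assoc M N P) (sq_id Q) e1)
          (sq_comp (assoc M (hcomp N P) Q) (hcomp_sq (sq_id M) (assoc N P Q) e2));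
  triangle : forall A B C (M : HC A B) (N : HC B C)
      (e1 : sq_tgt (sq_id M) = sq_src (lunit N))
      (e2 : sq_tgt (runit M) = sq_src (sq_id N)),
      sq_comp (assoc M (hunit B) N) (hcomp_sq (sq_id M) (lunit N) e1)
      = hcomp_sq (runit M) (sq_id N) e2
}.

Arguments HC {p} A B.
Arguments Sq {p A B C D} M N.
Arguments sq_src {p A B C D M N} _.
Arguments sq_tgt {p A B C D M N} _.
Arguments sq_id {p A B} M.
Arguments sq_comp {p A B C D E F M N P} _ _.
Arguments hunit {p} A.
Arguments hunit_sq {p A C} f.
Arguments hcomp {p A B C} M N.
Arguments hcomp_sq {p A B C A' B' C' M N M' N'} a b _.
Arguments lunit {p A B} M.
Arguments lunit_inv {p A B} M.
Arguments runit {p A B} M.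
Arguments runit_inv {p A B} M.

Definition is_companion {D : PDC} {A B : obj (D0 D)} (f : hom (D0 D) A B)
  (fh : HC A B) (p1 : Sq fh (hunit B)) (p2 : Sq (hunit A) fh) : Prop :=
  sq_src p1 = f /\ sq_tgt p1 = idm B /\
  sq_src p2 = idm A /\ sq_tgt p2 = f /\
  sq_comp p2 p1 = hunit_sq f /\
  exists e : sq_tgt p2 = sq_src p1,
    sq_comp (lunit_inv fh) (sq_comp (hcomp_sq p2 p1 e) (runit fh)) = sq_id fh.

Definition is_conjoint {D : PDC} {A B : obj (D0 D)} (f : hom (D0 D) A B)
  (fc : HC B A) (q1 : Sq fc (hunit B)) (q2 : Sq (hunit A) fc) : Prop :=
  sq_src q1 = idm B /\ sq_tgt q1 = f /\
  sq_src q2 = f /\ sq_tgt q2 = idm A /\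
  sq_comp q2 q1 = hunit_sq f /\
  exists e : sq_tgt q1 = sq_src q2,
    sq_comp (runit_inv fc) (sq_comp (hcomp_sq q1 q2 e) (lunit fc)) = sq_id fc.

Definition fibrant (D : PDC) : Prop :=
  forall (A B : obj (D0 D)) (f : hom (D0 D) A B),
    (exists fh p1 p2, @is_companion D A B f fh p1 p2) /\
    (exists fc q1 q2, @is_conjoint D A B f fc q1 q2).

Definition endo_obj (D : PDC) : Type := { A : obj (D0 D) & HC A A }.

Definition endo_hom (D : PDC) (x y : endo_obj D) : Type :=
  { s : Sq (projT2 x) (projT2 y) | sq_src s = sq_tgt s }.

Arguments endo_hom {D} x y.

Definition endo_id (D : PDC) (x : endo_obj D) : endo_hom x x.
Proof.
  exists (sq_id (projT2 x)). rewrite sq_src_id, sq_tgt_id. reflexivity.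
Defined.

Arguments endo_id {D} x.

Definition endo_comp (D : PDC) (x y z : endo_obj D)
  (s : endo_hom x y) (t : endo_hom y z) : endo_hom x z.
Proof.
  exists (sq_comp (proj1_sig s) (proj1_sig t)).
  rewrite sq_src_comp, sq_tgt_comp, (proj2_sig s), (proj2_sig t). reflexivity.
Defined.

Arguments endo_comp {D x y z} s t.

Lemma endo_hom_eq (D : PDC) (x y : endo_obj D) (s t : endo_hom x y) :
  proj1_sig s = proj1_sig t -> s = t.
Proof.
  destruct s as [s ps], t as [t pt]; simpl; intros ->.
  f_equal; apply proof_irrelevance.
Qed.

Definition Endo (D : PDC) : Category.
Proof.
  refine {| obj := endo_obj D; hom := @endo_hom D; idm := @endo_id D;
            comp := @endo_comp D |}.
  - intros; apply endo_hom_eq; simpl; apply sq_comp_id_l.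
  - intros; apply endo_hom_eq; simpl; apply sq_comp_id_r.
  - intros; apply endo_hom_eq; simpl; apply sq_comp_assoc.
Defined.

Definition endo_proj (D : PDC) : Functor (Endo D) (D0 D).
Proof.
  refine {| Fob := fun x : obj (Endo D) => projT1 x;
            Fhom := fun x y (s : hom (Endo D) x y) => sq_src (proj1_sig s) |}.
  - intros; simpl; apply sq_src_id.
  - intros; simpl; apply sq_src_comp.
Defined.

(* Let f : A -> B have companion fh (cells p1, p2) and conjoint fc (cells q1, q2).
   The cartesian lift of an endo-cell N on B is its restriction (fh . N) . fc, with
   the square (p1 . 1_N . q1) followed by unitors; dually the opcartesian lift of M
   on A is its extension (fc . M) . fh.  A square t : L => N over g;f factors through
   the restriction as  l^-1 ; r^-1 ; ((g;p2) . t . (g;q2)),  since the vertical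
   equations p2;p1 = 1_f and q2;q1 = 1_f turn the composite back into t up to the
   naturality of the unitors.  By the same naturality, uniqueness reduces to the
   factorization of the lift square itself being the identity; this is where the
   horizontal equations p1 . p2 = 1 and q2 . q1 = 1 enter, combined with the
   Kelly-style consequences of the pentagon and triangle axioms. *)

From Stdlib Require Import ProofIrrelevance.

Arguments assoc {p A B C D} M N P.
Arguments assoc_inv {p A B C D} M N P.

Notation "a ;; b" := (sq_comp a b) (at level 42, right associativity).

Create HintDb sq_boundary.
#[export] Hint Rewrite sq_src_comp sq_tgt_comp hcomp_sq_src hcomp_sq_tgt sq_src_id sq_tgt_id
  hunit_sq_src hunit_sq_tgt assoc_src assoc_tgt assoc_inv_src assoc_inv_tgt
  lunit_src lunit_tgt lunit_inv_src lunit_inv_tgt runit_src runit_tgt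
  runit_inv_src runit_inv_tgt comp_id_l comp_id_r comp_assoc : sq_boundary.

Ltac closed_boundary r :=
  lazymatch r with
  | context [sq_src _] => fail
  | context [sq_tgt _] => fail
  | _ => idtac
  end.

(* Boundary hypotheses whose other side mentions no boundary are used as
   rewrite rules; the remaining ones only feed [congruence]. *)
Ltac rewrite_boundary_fact :=
  match goal with
  | H : @sq_src _ _ _ _ _ _ _ ?x = ?r |- context [@sq_src _ _ _ _ _ _ _ ?x] =>
      closed_boundary r; rewrite H
  | H : ?r = @sq_src _ _ _ _ _ _ _ ?x |- context [@sq_src _ _ _ _ _ _ _ ?x] =>
      closed_boundary r; rewrite <- H
  | H : @sq_tgt _ _ _ _ _ _ _ ?x = ?r |- context [@sq_tgt _ _ _ _ _ _ _ ?x] =>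
      closed_boundary r; rewrite H
  | H : ?r = @sq_tgt _ _ _ _ _ _ _ ?x |- context [@sq_tgt _ _ _ _ _ _ _ ?x] =>
      closed_boundary r; rewrite <- H
  end.

(* Normalizing the hypotheses is only safe when the goal has no evars: an evar
   occurring in the goal would lose the rewritten hypotheses from its context. *)
Ltac boundary :=
  lazymatch goal with |- @eq (hom _ _ _) _ _ => idtac end;
  cbv zeta;
  lazymatch goal with
  | |- ?G => tryif has_evar G then idtac else
      (repeat match goal with
       | H : @eq (hom _ _ _) _ _ |- _ => progress autorewrite with sq_boundary in H
       end)
  end;
  repeat (autorewrite with sq_boundary; rewrite_boundary_fact);
  autorewrite with sq_boundary;
  first [ reflexivity | congruence ].

Lemma hcomp_sq_congr {D : PDC} {A B C A' B' C' : obj (D0 D)} {M : HC A B} {N : HC B C}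
  {M' : HC A' B'} {N' : HC B' C'} (a a' : Sq M M') (b b' : Sq N N') e e' :
  a = a' -> b = b' -> hcomp_sq a b e = hcomp_sq a' b' e'.
Proof. intros -> ->. f_equal. apply proof_irrelevance. Qed.

Ltac sq_congr :=
  repeat first [ reflexivity | apply hcomp_sq_congr | progress f_equal | apply proof_irrelevance ].

(* Rewriting with a lemma about horizontal composites leaves the compatibility
   proofs of the new composites as side goals, all of them boundary equations;
   solving the evar-free ones first instantiates the evars of the others. *)
Tactic Notation "sq_rewrite" uconstr(L) :=
  unshelve erewrite L; do 2 try solve [boundary]; try solve [sq_congr].
Tactic Notation "sq_rewrite" "<-" uconstr(L) :=
  unshelve erewrite <- L; do 2 try solve [boundary]; try solve [sq_congr].

(** * Coherence in a pseudo double category *)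

Section Calculus.
Context {D : PDC}.
Notation Ob := (obj (D0 D)).

Lemma sq_comp_prefix2 {A B C E F G H K : Ob} {P : HC A B} {Q : HC C E} {R : HC F G} {S : HC H K}
  (x : Sq P Q) (y : Sq Q R) (z : Sq P R) (r : Sq R S) :
  x ;; y = z -> x ;; y ;; r = z ;; r.
Proof. intros <-. symmetry. apply sq_comp_assoc. Qed.

Lemma sq_comp_prefix3 {A B C E F G H K X Y : Ob} {P : HC A B} {Q : HC C E} {R : HC F G}
  {S : HC H K} {T : HC X Y} (x : Sq P Q) (y : Sq Q R) (z : Sq R S) (w : Sq P S) (r : Sq S T) :
  x ;; y ;; z = w -> x ;; y ;; z ;; r = w ;; r.
Proof. intros <-. rewrite !sq_comp_assoc. reflexivity. Qed.

Lemma sq_comp_cancel_l {A B C E F G : Ob} {P : HC A B} {Q : HC C E} {R : HC F G}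
  (z : Sq P Q) (zi : Sq Q P) (x y : Sq Q R) :
  zi ;; z = sq_id Q -> z ;; x = z ;; y -> x = y.
Proof.
  intros Hz Hxy.
  rewrite <- (sq_comp_id_l _ _ _ _ _ _ _ x), <- (sq_comp_id_l _ _ _ _ _ _ _ y), <- Hz,
    !sq_comp_assoc, Hxy.
  reflexivity.
Qed.

Lemma sq_comp_cancel_r {A B C E F G : Ob} {P : HC A B} {Q : HC C E} {R : HC F G}
  (z : Sq Q R) (zi : Sq R Q) (x y : Sq P Q) :
  z ;; zi = sq_id Q -> x ;; z = y ;; z -> x = y.
Proof.
  intros Hz Hxy.
  rewrite <- (sq_comp_id_r _ _ _ _ _ _ _ x), <- (sq_comp_id_r _ _ _ _ _ _ _ y), <- Hz,
    <- !sq_comp_assoc, Hxy.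
  reflexivity.
Qed.

Section Inverses.
Context {A B C E X Y : Ob} {Q : HC X Y}.

Lemma lunitK (M : HC A B) (r : Sq (hcomp (hunit A) M) Q) : lunit M ;; lunit_inv M ;; r = r.
Proof. rewrite <- sq_comp_assoc, lunit_iso1. apply sq_comp_id_l. Qed.

Lemma lunit_invK (M : HC A B) (r : Sq M Q) : lunit_inv M ;; lunit M ;; r = r.
Proof. rewrite <- sq_comp_assoc, lunit_iso2. apply sq_comp_id_l. Qed.

Lemma runitK (M : HC A B) (r : Sq (hcomp M (hunit B)) Q) : runit M ;; runit_inv M ;; r = r.
Proof. rewrite <- sq_comp_assoc, runit_iso1. apply sq_comp_id_l. Qed.

Lemma runit_invK (M : HC A B) (r : Sq M Q) : runit_inv M ;; runit M ;; r = r.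
Proof. rewrite <- sq_comp_assoc, runit_iso2. apply sq_comp_id_l. Qed.

Lemma assocK (M : HC A B) (N : HC B C) (P : HC C E) (r : Sq (hcomp (hcomp M N) P) Q) :
  assoc M N P ;; assoc_inv M N P ;; r = r.
Proof. rewrite <- sq_comp_assoc, assoc_iso1. apply sq_comp_id_l. Qed.

Lemma assoc_invK (M : HC A B) (N : HC B C) (P : HC C E) (r : Sq (hcomp M (hcomp N P)) Q) :
  assoc_inv M N P ;; assoc M N P ;; r = r.
Proof. rewrite <- sq_comp_assoc, assoc_iso2. apply sq_comp_id_l. Qed.

End Inverses.

Section Interchange.
Context {A B C A' B' C' A'' B'' C'' : Ob} {M : HC A B} {N : HC B C}.

Lemma hcomp_sq_factor {N' : HC B C''} {M' : HC A'' B} (a : Sq M M') (b : Sq N N') e e1 e2 :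
  hcomp_sq a b e = hcomp_sq a (sq_id N) e1 ;; hcomp_sq (sq_id M') b e2.
Proof.
  sq_rewrite <- hcomp_sq_comp.
  apply hcomp_sq_congr; [symmetry; apply sq_comp_id_r | symmetry; apply sq_comp_id_l].
Qed.

Lemma hcomp_sq_comp_r {M' : HC A' B'} {N' : HC B' C'} {N'' : HC B' C''}
  (a : Sq M M') (b : Sq N N') (b' : Sq N' N'') e e1 e2 :
  hcomp_sq a (b ;; b') e = hcomp_sq a b e1 ;; hcomp_sq (sq_id M') b' e2.
Proof. sq_rewrite <- hcomp_sq_comp. apply hcomp_sq_congr; [symmetry; apply sq_comp_id_r | reflexivity]. Qed.

Lemma hcomp_sq_comp_r' {M' : HC A' B''} {N' : HC B C'} {N'' : HC B'' C''}
  (a : Sq M M') (b : Sq N N') (b' : Sq N' N'') e e1 e2 :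
  hcomp_sq a (b ;; b') e = hcomp_sq (sq_id M) b e1 ;; hcomp_sq a b' e2.
Proof. sq_rewrite <- hcomp_sq_comp. apply hcomp_sq_congr; [symmetry; apply sq_comp_id_l | reflexivity]. Qed.

Lemma hcomp_sq_comp_l {M' : HC A' B'} {N' : HC B' C'} {M'' : HC A'' B'}
  (a : Sq M M') (a' : Sq M' M'') (b : Sq N N') e e1 e2 :
  hcomp_sq (a ;; a') b e = hcomp_sq a b e1 ;; hcomp_sq a' (sq_id N') e2.
Proof. sq_rewrite <- hcomp_sq_comp. apply hcomp_sq_congr; [reflexivity | symmetry; apply sq_comp_id_r]. Qed.

Lemma hcomp_sq_comp_l' {M' : HC A' B} {N' : HC B'' C'} {M'' : HC A'' B''}
  (a : Sq M M') (a' : Sq M' M'') (b : Sq N N') e e1 e2 :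
  hcomp_sq (a ;; a') b e = hcomp_sq a (sq_id N) e1 ;; hcomp_sq a' b e2.
Proof. sq_rewrite <- hcomp_sq_comp. apply hcomp_sq_congr; [reflexivity | symmetry; apply sq_comp_id_l]. Qed.

End Interchange.

Section Naturality.
Context {A B A' B' : Ob} {M : HC A B} {M' : HC A' B'} (a : Sq M M').

Lemma lunit_natural (f : hom (D0 D) A A') (Hf : sq_src a = f) e :
  hcomp_sq (hunit_sq f) a e ;; lunit M' = lunit M ;; a.
Proof. subst f. apply lunit_nat. Qed.

Lemma runit_natural (f : hom (D0 D) B B') (Hf : sq_tgt a = f) e :
  hcomp_sq a (hunit_sq f) e ;; runit M' = runit M ;; a.
Proof. subst f. apply runit_nat. Qed.

Lemma lunit_inv_natural (f : hom (D0 D) A A') (Hf : sq_src a = f) e :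
  lunit_inv M ;; hcomp_sq (hunit_sq f) a e = a ;; lunit_inv M'.
Proof.
  transitivity (lunit_inv M ;; (hcomp_sq (hunit_sq f) a e ;; lunit M') ;; lunit_inv M').
  - rewrite sq_comp_assoc, lunit_iso1, sq_comp_id_r. reflexivity.
  - rewrite lunit_natural by exact Hf. rewrite sq_comp_assoc, lunit_invK. reflexivity.
Qed.

Lemma runit_inv_natural (f : hom (D0 D) B B') (Hf : sq_tgt a = f) e :
  runit_inv M ;; hcomp_sq a (hunit_sq f) e = a ;; runit_inv M'.
Proof.
  transitivity (runit_inv M ;; (hcomp_sq a (hunit_sq f) e ;; runit M') ;; runit_inv M').
  - rewrite sq_comp_assoc, runit_iso1, sq_comp_id_r. reflexivity.
  - rewrite runit_natural by exact Hf. rewrite sq_comp_assoc, runit_invK. reflexivity.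
Qed.

End Naturality.

Lemma lunit_natural_id {A B B' : Ob} {M : HC A B} {M' : HC A B'} (a : Sq M M')
  (Ha : sq_src a = idm A) e :
  hcomp_sq (sq_id (hunit A)) a e ;; lunit M' = lunit M ;; a.
Proof. revert e. rewrite <- hunit_sq_id. intros. apply lunit_natural. exact Ha. Qed.

Lemma runit_natural_id {A B A' : Ob} {M : HC A B} {M' : HC A' B} (a : Sq M M')
  (Ha : sq_tgt a = idm B) e :
  hcomp_sq a (sq_id (hunit B)) e ;; runit M' = runit M ;; a.
Proof. revert e. rewrite <- hunit_sq_id. intros. apply runit_natural. exact Ha. Qed.

Lemma runit_inv_natural_id {A B A' : Ob} {M : HC A B} {M' : HC A' B} (a : Sq M M')
  (Ha : sq_tgt a = idm B) e :
  runit_inv M ;; hcomp_sq a (sq_id (hunit B)) e = a ;; runit_inv M'.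
Proof. revert e. rewrite <- hunit_sq_id. intros. apply runit_inv_natural. exact Ha. Qed.

Lemma hcomp_hunit_l_inj {A B B' : Ob} {M : HC A B} {M' : HC A B'} (a b : Sq M M')
  (Ha : sq_src a = idm A) (Hb : sq_src b = idm A) e e' :
  hcomp_sq (sq_id (hunit A)) a e = hcomp_sq (sq_id (hunit A)) b e' -> a = b.
Proof.
  intros Hab.
  rewrite <- (lunit_invK M a), <- (lunit_invK M b),
    <- (lunit_natural_id a Ha e), <- (lunit_natural_id b Hb e'), Hab.
  reflexivity.
Qed.

Lemma hcomp_hunit_r_inj {A B A' : Ob} {M : HC A B} {M' : HC A' B} (a b : Sq M M')
  (Ha : sq_tgt a = idm B) (Hb : sq_tgt b = idm B) e e' :
  hcomp_sq a (sq_id (hunit B)) e = hcomp_sq b (sq_id (hunit B)) e' -> a = b.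
Proof.
  intros Hab.
  rewrite <- (runit_invK M a), <- (runit_invK M b),
    <- (runit_natural_id a Ha e), <- (runit_natural_id b Hb e'), Hab.
  reflexivity.
Qed.

Lemma hcomp_sq_id_l_inverse {A B C C' : Ob} (M : HC A B) {N : HC B C} {N' : HC B C'}
  (x : Sq N N') (y : Sq N' N) e e' :
  x ;; y = sq_id N -> hcomp_sq (sq_id M) x e ;; hcomp_sq (sq_id M) y e' = sq_id _.
Proof.
  intros Hxy. sq_rewrite <- hcomp_sq_comp.
  sq_rewrite (hcomp_sq_congr _ _ _ _ _ _ (sq_comp_id_l _ _ _ _ _ _ _ _) Hxy).
  apply hcomp_sq_id.
Qed.

Lemma hcomp_sq_id_r_inverse {A B C A' : Ob} {M : HC A B} {M' : HC A' B} (N : HC B C)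
  (x : Sq M M') (y : Sq M' M) e e' :
  x ;; y = sq_id M -> hcomp_sq x (sq_id N) e ;; hcomp_sq y (sq_id N) e' = sq_id _.
Proof.
  intros Hxy. sq_rewrite <- hcomp_sq_comp.
  sq_rewrite (hcomp_sq_congr _ _ _ _ _ _ Hxy (sq_comp_id_l _ _ _ _ _ _ _ _)).
  apply hcomp_sq_id.
Qed.

Lemma hcomp_sq_assoc {A B C E A' B' C' E' : Ob} {M : HC A B} {N : HC B C} {P : HC C E}
  {M' : HC A' B'} {N' : HC B' C'} {P' : HC C' E'}
  (a : Sq M M') (b : Sq N N') (c : Sq P P') e1 e2 e3 e4 :
  hcomp_sq (hcomp_sq a b e1) c e2
  = assoc M N P ;; hcomp_sq a (hcomp_sq b c e3) e4 ;; assoc_inv M' N' P'.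
Proof.
  rewrite <- sq_comp_assoc, <- (assoc_nat _ _ _ _ _ _ _ _ _ _ _ _ _ _ _ _ _ _ e1 e2 e3 e4).
  rewrite sq_comp_assoc, assoc_iso1, sq_comp_id_r. reflexivity.
Qed.

Lemma hcomp_sq_assoc_inv {A B C E A' B' C' E' : Ob} {M : HC A B} {N : HC B C} {P : HC C E}
  {M' : HC A' B'} {N' : HC B' C'} {P' : HC C' E'}
  (a : Sq M M') (b : Sq N N') (c : Sq P P') e1 e2 e3 e4 :
  hcomp_sq a (hcomp_sq b c e3) e4
  = assoc_inv M N P ;; hcomp_sq (hcomp_sq a b e1) c e2 ;; assoc M' N' P'.
Proof. rewrite (assoc_nat _ _ _ _ _ _ _ _ _ _ _ _ _ _ _ _ _ _ e1 e2 e3 e4), assoc_invK. reflexivity. Qed.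

Lemma assoc_natural_l {A B C E A' : Ob} {M : HC A B} {M' : HC A' B} (X : HC B C) (Y : HC C E)
  (a : Sq M M') e1 e2 e3 :
  hcomp_sq (hcomp_sq a (sq_id X) e1) (sq_id Y) e2 ;; assoc M' X Y
  = assoc M X Y ;; hcomp_sq a (sq_id (hcomp X Y)) e3.
Proof. sq_rewrite assoc_nat. f_equal. apply hcomp_sq_congr; [reflexivity | apply hcomp_sq_id]. Qed.

Lemma assoc_natural_r {A B C E : Ob} (M : HC A B) (N : HC B C) {P P' : HC C E}
  (c : Sq P P') e e3 e4 :
  hcomp_sq (sq_id (hcomp M N)) c e ;; assoc M N P'
  = assoc M N P ;; hcomp_sq (sq_id M) (hcomp_sq (sq_id N) c e3) e4.
Proof.
  sq_rewrite (hcomp_sq_congr _ _ _ _ _ _ (eq_sym (hcomp_sq_id _ _ _ _ M N _)) eq_refl).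
  apply assoc_nat.
Qed.

Lemma assoc_lunit {A B C : Ob} (X : HC A B) (Y : HC B C) e :
  assoc (hunit A) X Y ;; lunit (hcomp X Y) = hcomp_sq (lunit X) (sq_id Y) e.
Proof.
  unshelve eapply hcomp_hunit_l_inj; try solve [boundary].
  unshelve eapply (sq_comp_cancel_l (assoc (hunit A) (hcomp (hunit A) X) Y) (assoc_inv _ _ _)).
  { apply assoc_iso2. }
  unshelve eapply (sq_comp_cancel_l (hcomp_sq (assoc (hunit A) (hunit A) X) (sq_id Y) _)
                                    (hcomp_sq (assoc_inv _ _ _) (sq_id Y) _));
    try solve [boundary].
  { apply hcomp_sq_id_r_inverse, assoc_iso2. }
  sq_rewrite hcomp_sq_comp_r.
  sq_rewrite (sq_comp_prefix3 _ _ _ _ _ (eq_sym (pentagon _ _ _ _ _ _ _ _ _ _ _ _))).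
  rewrite sq_comp_assoc.
  sq_rewrite triangle.
  sq_rewrite <- assoc_natural_l.
  sq_rewrite (hcomp_sq_congr _ _ _ _ _ _ (eq_sym (triangle _ _ _ _ _ _ _ _)) eq_refl).
  sq_rewrite hcomp_sq_comp_l.
  rewrite sq_comp_assoc.
  sq_rewrite assoc_nat.
  all: sq_congr.
Qed.

Lemma assoc_runit {A B C : Ob} (X : HC A B) (Y : HC B C) e :
  assoc X Y (hunit C) ;; hcomp_sq (sq_id X) (runit Y) e = runit (hcomp X Y).
Proof.
  unshelve eapply hcomp_hunit_r_inj; try solve [boundary].
  unshelve eapply (sq_comp_cancel_r (assoc X Y (hunit C)) (assoc_inv _ _ _)).
  { apply assoc_iso1. }
  sq_rewrite hcomp_sq_comp_l.
  rewrite sq_comp_assoc.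
  sq_rewrite assoc_nat.
  sq_rewrite (hcomp_sq_congr _ _ _ _ _ _ eq_refl (eq_sym (triangle _ _ _ _ _ _ _ _))).
  sq_rewrite hcomp_sq_comp_r.
  sq_rewrite (sq_comp_prefix3 _ _ _ _ _ (eq_sym (pentagon _ _ _ _ _ _ _ _ _ _ _ _))).
  rewrite sq_comp_assoc.
  sq_rewrite <- assoc_natural_r.
  sq_rewrite (sq_comp_prefix2 _ _ _ _ (triangle _ _ _ _ _ _ _ _)).
  all: sq_congr.
Qed.

Lemma triangle_inv {A B C : Ob} (M : HC A B) (N : HC B C) e e' :
  assoc_inv M (hunit B) N ;; hcomp_sq (runit M) (sq_id N) e = hcomp_sq (sq_id M) (lunit N) e'.
Proof. rewrite <- (triangle _ _ _ _ _ _ e' e). apply assoc_invK. Qed.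

Lemma assoc_inv_lunit {A B C : Ob} (X : HC A B) (Y : HC B C) e :
  assoc_inv (hunit A) X Y ;; hcomp_sq (lunit X) (sq_id Y) e = lunit (hcomp X Y).
Proof. rewrite <- (assoc_lunit X Y e). apply assoc_invK. Qed.

Lemma assoc_inv_runit {A B C : Ob} (X : HC A B) (Y : HC B C) e :
  assoc_inv X Y (hunit C) ;; runit (hcomp X Y) = hcomp_sq (sq_id X) (runit Y) e.
Proof. rewrite <- (assoc_runit X Y e). apply assoc_invK. Qed.

Lemma lunit_inv_assoc {A B C : Ob} (X : HC A B) (Y : HC B C) e :
  hcomp_sq (lunit_inv X) (sq_id Y) e ;; assoc (hunit A) X Y = lunit_inv (hcomp X Y).
Proof.
  unshelve eapply (sq_comp_cancel_r (lunit (hcomp X Y)) (lunit_inv (hcomp X Y))).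
  { apply lunit_iso1. }
  rewrite lunit_iso2, sq_comp_assoc.
  sq_rewrite assoc_lunit.
  apply hcomp_sq_id_r_inverse, lunit_iso2.
Qed.

Lemma hcomp_sq3_comp {A0 B0 C0 E0 A1 B1 C1 E1 A2 B2 C2 E2 : Ob}
  {M0 : HC A0 B0} {N0 : HC B0 C0} {P0 : HC C0 E0}
  {M1 : HC A1 B1} {N1 : HC B1 C1} {P1 : HC C1 E1}
  {M2 : HC A2 B2} {N2 : HC B2 C2} {P2 : HC C2 E2}
  (a : Sq M0 M1) (a' : Sq M1 M2) (b : Sq N0 N1) (b' : Sq N1 N2) (c : Sq P0 P1) (c' : Sq P1 P2)
  e1 e2 f1 f2 f3 f4 :
  hcomp_sq (hcomp_sq (a ;; a') (b ;; b') e1) (c ;; c') e2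
  = hcomp_sq (hcomp_sq a b f1) c f2 ;; hcomp_sq (hcomp_sq a' b' f3) c' f4.
Proof.
  sq_rewrite <- (hcomp_sq_comp _ _ _ _ _ _ _ _ _ _ _ _ _ _ _ _ (hcomp_sq a b f1) (hcomp_sq a' b' f3)).
  apply hcomp_sq_congr; [ | reflexivity].
  sq_rewrite <- hcomp_sq_comp.
Qed.

Lemma hcomp_sq3_comp_mid {A B C E A' B' C'' E' : Ob}
  {M : HC A B} {N : HC B C} {P : HC C E} {M' : HC A' B'} {N' : HC B' C} {N'' : HC B' C''}
  {P' : HC C'' E'} (a : Sq M M') (b : Sq N N') (b' : Sq N' N'') (c : Sq P P')
  e e' e1 e2 e3 e4 :
  hcomp_sq (hcomp_sq a (b ;; b') e) c e'
  = hcomp_sq (hcomp_sq a b e1) (sq_id P) e2 ;; hcomp_sq (hcomp_sq (sq_id M') b' e3) c e4.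
Proof.
  sq_rewrite (hcomp_sq_congr _ _ _ _ _ _ (hcomp_sq_comp_r a b b' _ _ _) eq_refl).
  sq_rewrite hcomp_sq_comp_l'.
Qed.

Lemma unitors_inv_natural {C X : Ob} {L : HC C C} {M : HC X X} (th : Sq L M)
  (g : hom (D0 D) C X) (Hs : sq_src th = g) (Ht : sq_tgt th = g) e1 e2 :
  lunit_inv L ;; runit_inv (hcomp (hunit C) L) ;;
  hcomp_sq (hcomp_sq (hunit_sq g) th e1) (hunit_sq g) e2
  = th ;; lunit_inv M ;; runit_inv (hcomp (hunit X) M).
Proof.
  sq_rewrite runit_inv_natural.
  rewrite <- sq_comp_assoc.
  sq_rewrite lunit_inv_natural.
  apply sq_comp_assoc.
Qed.

Lemma unitors_natural {C X : Ob} {L : HC C C} {N : HC X X} (th : Sq N L)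
  (g : hom (D0 D) X C) (Hs : sq_src th = g) (Ht : sq_tgt th = g) e1 e2 :
  hcomp_sq (hcomp_sq (hunit_sq g) th e1) (hunit_sq g) e2 ;; runit (hcomp (hunit C) L) ;; lunit L
  = runit (hcomp (hunit X) N) ;; lunit N ;; th.
Proof.
  sq_rewrite (sq_comp_prefix2 _ _ _ _ (runit_natural _ _ _ _)).
  rewrite !sq_comp_assoc.
  sq_rewrite lunit_natural.
Qed.

Lemma unitors_conj_hunit_sq {C X : Ob} {L : HC C C} {N : HC X X} (t : Sq L N)
  (g : hom (D0 D) C X) (Hs : sq_src t = g) (Ht : sq_tgt t = g) e1 e2 :
  lunit_inv L ;; runit_inv (hcomp (hunit C) L) ;;
  hcomp_sq (hcomp_sq (hunit_sq g) t e1) (hunit_sq g) e2 ;; runit (hcomp (hunit X) N) ;; lunit N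
  = t.
Proof.
  sq_rewrite (unitors_natural t g).
  rewrite runit_invK. apply lunit_invK.
Qed.

Lemma lunit_absorb_assoc {A B C E : Ob} {X : HC A B} (p : Sq X (hunit B)) (N : HC B C)
  (P : HC C E) e1 e2 e3 :
  hcomp_sq (hcomp_sq p (sq_id N) e1 ;; lunit N) (sq_id P) e2
  = assoc X N P ;; hcomp_sq p (sq_id (hcomp N P)) e3 ;; lunit (hcomp N P).
Proof.
  sq_rewrite hcomp_sq_comp_l.
  sq_rewrite (hcomp_sq_assoc p (sq_id N) (sq_id P)).
  rewrite !sq_comp_assoc.
  sq_rewrite assoc_inv_lunit.
  all: sq_congr; apply hcomp_sq_id.
Qed.

Lemma runit_absorb_assoc {A B C E : Ob} (M : HC A B) (N : HC B C) {Y : HC C E}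
  (q : Sq Y (hunit C)) e1 e2 e3 :
  hcomp_sq (sq_id M) (hcomp_sq (sq_id N) q e1 ;; runit N) e2
  = assoc_inv M N Y ;; hcomp_sq (sq_id (hcomp M N)) q e3 ;; runit (hcomp M N).
Proof.
  sq_rewrite hcomp_sq_comp_r.
  sq_rewrite (hcomp_sq_assoc_inv (sq_id M) (sq_id N) q).
  rewrite !sq_comp_assoc.
  sq_rewrite assoc_runit.
  all: sq_congr; apply hcomp_sq_id.
Qed.

Lemma unitors_absorb_split {A B E : Ob} {X : HC A B} {Y : HC B E} (N : HC B B)
  (p : Sq X (hunit B)) (q : Sq Y (hunit B)) e1 e2 e3 e4 e5 :
  hcomp_sq (hcomp_sq p (sq_id N) e1) q e2 ;; runit (hcomp (hunit B) N) ;; lunit N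
  = hcomp_sq (hcomp_sq p (sq_id N) e3 ;; lunit N) (sq_id Y) e4 ;;
    hcomp_sq (sq_id N) q e5 ;; runit N.
Proof.
  sq_rewrite (hcomp_sq_factor (hcomp_sq p (sq_id N) e1) q).
  sq_rewrite <- (runit_natural_id (lunit N)).
  rewrite !sq_comp_assoc.
  sq_rewrite (sq_comp_prefix2 _ _ _ _ (eq_sym (hcomp_sq_comp _ _ _ _ _ _ _ _ _ _ _ _ _ _ _ _
                                        (sq_id _) (lunit N) q (sq_id _) _ _ _))).
  sq_rewrite (hcomp_sq_congr _ _ _ _ _ _ (sq_comp_id_l _ _ _ _ _ _ _ _)
                                         (sq_comp_id_r _ _ _ _ _ _ _ _)).
  sq_rewrite (hcomp_sq_factor (lunit N) q).
  sq_rewrite hcomp_sq_comp_l.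
  rewrite !sq_comp_assoc.
  all: sq_congr.
Qed.

Lemma unitors_inv_absorb_split {A B E : Ob} {X : HC A B} {Y : HC E A} (M : HC A A)
  (q : Sq (hunit A) Y) (p : Sq (hunit A) X) e1 e2 e3 e4 :
  lunit_inv M ;; runit_inv (hcomp (hunit A) M) ;; hcomp_sq (hcomp_sq q (sq_id M) e1) p e2
  = (lunit_inv M ;; hcomp_sq q (sq_id M) e3) ;;
    (runit_inv (hcomp Y M) ;; hcomp_sq (sq_id (hcomp Y M)) p e4).
Proof.
  sq_rewrite (hcomp_sq_factor (hcomp_sq q (sq_id M) e1) p).
  rewrite !sq_comp_assoc.
  sq_rewrite (sq_comp_prefix2 _ _ _ _ (runit_inv_natural_id _ _ _)).
  rewrite !sq_comp_assoc.
  all: sq_congr.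
Qed.

End Calculus.

(** * Companions and conjoints *)

Section Lifts.
Context {D : PDC} {A B : obj (D0 D)} {f : hom (D0 D) A B}
  {fh : HC A B} {p1 : Sq fh (hunit B)} {p2 : Sq (hunit A) fh} (Hp : is_companion f fh p1 p2)
  {fc : HC B A} {q1 : Sq fc (hunit B)} {q2 : Sq (hunit A) fc} (Hq : is_conjoint f fc q1 q2).

Let p1_src : sq_src p1 = f := proj1 Hp.
Let p1_tgt : sq_tgt p1 = idm B := proj1 (proj2 Hp).
Let p2_src : sq_src p2 = idm A := proj1 (proj2 (proj2 Hp)).
Let p2_tgt : sq_tgt p2 = f := proj1 (proj2 (proj2 (proj2 Hp))).
Let companion_vert : p2 ;; p1 = hunit_sq f := proj1 (proj2 (proj2 (proj2 (proj2 Hp)))).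
Let q1_src : sq_src q1 = idm B := proj1 Hq.
Let q1_tgt : sq_tgt q1 = f := proj1 (proj2 Hq).
Let q2_src : sq_src q2 = f := proj1 (proj2 (proj2 Hq)).
Let q2_tgt : sq_tgt q2 = idm A := proj1 (proj2 (proj2 (proj2 Hq))).
Let conjoint_vert : q2 ;; q1 = hunit_sq f := proj1 (proj2 (proj2 (proj2 (proj2 Hq)))).

Lemma companion_horiz e : hcomp_sq p2 p1 e ;; runit fh = lunit fh.
Proof.
  pose proof Hp as (_ & _ & _ & _ & _ & e0 & Hz).
  transitivity (lunit fh ;; lunit_inv fh ;; hcomp_sq p2 p1 e0 ;; runit fh).
  - rewrite lunitK. sq_congr.
  - rewrite Hz. apply sq_comp_id_r.
Qed.

Lemma conjoint_horiz e : hcomp_sq q1 q2 e ;; lunit fc = runit fc.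
Proof.
  pose proof Hq as (_ & _ & _ & _ & _ & e0 & Hz).
  transitivity (runit fc ;; runit_inv fc ;; hcomp_sq q1 q2 e0 ;; lunit fc).
  - rewrite runitK. sq_congr.
  - rewrite Hz. apply sq_comp_id_r.
Qed.

Lemma companion_zigzag_lunit {Z : obj (D0 D)} (Y : HC B Z) e1 e2 :
  hcomp_sq p2 (hcomp_sq p1 (sq_id Y) e1 ;; lunit Y) e2 = lunit (hcomp fh Y).
Proof.
  unshelve eapply (sq_comp_cancel_l (assoc (hunit A) fh Y) (assoc_inv _ _ _)).
  { apply assoc_iso2. }
  sq_rewrite hcomp_sq_comp_r.
  sq_rewrite hcomp_sq_assoc_inv.
  rewrite !sq_comp_assoc, assocK.
  sq_rewrite triangle.
  sq_rewrite <- hcomp_sq_comp.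
  sq_rewrite (hcomp_sq_congr _ _ _ _ _ _ (companion_horiz _) (sq_comp_id_l _ _ _ _ _ _ _ _)).
  sq_rewrite assoc_lunit.
Qed.

Lemma companion_zigzag_runit_inv {Z : obj (D0 D)} (X : HC Z A) e1 e2 :
  hcomp_sq (runit_inv X ;; hcomp_sq (sq_id X) p2 e1) p1 e2 = runit_inv (hcomp X fh).
Proof.
  unshelve eapply (sq_comp_cancel_r (runit (hcomp X fh)) (runit_inv (hcomp X fh))).
  { apply runit_iso1. }
  rewrite runit_iso2.
  sq_rewrite hcomp_sq_comp_l'.
  sq_rewrite (hcomp_sq_assoc (sq_id X) p2 p1).
  rewrite !sq_comp_assoc.
  sq_rewrite assoc_inv_runit.
  sq_rewrite <- hcomp_sq_comp.
  sq_rewrite (hcomp_sq_congr _ _ _ _ _ _ (sq_comp_id_l _ _ _ _ _ _ _ _) (companion_horiz _)).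
  sq_rewrite triangle.
  sq_rewrite <- hcomp_sq_comp.
  sq_rewrite (hcomp_sq_congr _ _ _ _ _ _ (runit_iso2 _ _ _ _) (sq_comp_id_l _ _ _ _ _ _ _ _)).
  apply hcomp_sq_id.
Qed.

Lemma conjoint_zigzag_runit {Z : obj (D0 D)} (X : HC Z B) e1 e2 :
  hcomp_sq (hcomp_sq (sq_id X) q1 e1 ;; runit X) q2 e2 = runit (hcomp X fc).
Proof.
  unshelve eapply (sq_comp_cancel_l (assoc_inv X fc (hunit A)) (assoc _ _ _)).
  { apply assoc_iso1. }
  sq_rewrite hcomp_sq_comp_l.
  sq_rewrite (hcomp_sq_assoc (sq_id X) q1 q2).
  rewrite !sq_comp_assoc, assoc_invK.
  sq_rewrite triangle_inv.
  sq_rewrite <- hcomp_sq_comp.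
  sq_rewrite (hcomp_sq_congr _ _ _ _ _ _ (sq_comp_id_l _ _ _ _ _ _ _ _) (conjoint_horiz _)).
  sq_rewrite assoc_inv_runit.
Qed.

Lemma conjoint_zigzag_lunit_inv {Z : obj (D0 D)} (Y : HC A Z) e1 e2 :
  hcomp_sq q1 (lunit_inv Y ;; hcomp_sq q2 (sq_id Y) e1) e2 = lunit_inv (hcomp fc Y).
Proof.
  unshelve eapply (sq_comp_cancel_r (lunit (hcomp fc Y)) (lunit_inv (hcomp fc Y))).
  { apply lunit_iso1. }
  rewrite lunit_iso2.
  sq_rewrite hcomp_sq_comp_r'.
  sq_rewrite (hcomp_sq_assoc_inv q1 q2 (sq_id Y)).
  rewrite !sq_comp_assoc.
  sq_rewrite assoc_lunit.
  sq_rewrite <- hcomp_sq_comp.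
  sq_rewrite (hcomp_sq_congr _ _ _ _ _ _ (conjoint_horiz _) (sq_comp_id_l _ _ _ _ _ _ _ _)).
  sq_rewrite triangle_inv.
  sq_rewrite <- hcomp_sq_comp.
  sq_rewrite (hcomp_sq_congr _ _ _ _ _ _ (sq_comp_id_l _ _ _ _ _ _ _ _) (lunit_iso2 _ _ _ _)).
  apply hcomp_sq_id.
Qed.


(** * Restrictions are cartesian *)

(* A notation rather than a definition, so that the boundary rewrite rules see
   through it in implicit arguments. *)
Local Notation restriction N := (hcomp (hcomp fh N) fc).

Definition restriction_sq (N : HC B B) : Sq (restriction N) N :=
  hcomp_sq (hcomp_sq p1 (sq_id N) ltac:(boundary)) q1 ltac:(boundary)
  ;; runit (hcomp (hunit B) N) ;; lunit N.

Lemma restriction_sq_src (N : HC B B) : sq_src (restriction_sq N) = f.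
Proof. unfold restriction_sq. boundary. Qed.

Lemma restriction_sq_tgt (N : HC B B) : sq_tgt (restriction_sq N) = f.
Proof. unfold restriction_sq. boundary. Qed.

#[local] Hint Rewrite restriction_sq_src restriction_sq_tgt : sq_boundary.

Section RestrictionFactor.
Context {C : obj (D0 D)} {L : HC C C} {N : HC B B} (g : hom (D0 D) C A).

Definition restriction_factor (t : Sq L N) (Hs : sq_src t = comp g f) (Ht : sq_tgt t = comp g f) :
  Sq L (restriction N) :=
  lunit_inv L ;; runit_inv (hcomp (hunit C) L) ;;
  hcomp_sq (hcomp_sq (hunit_sq g ;; p2) t ltac:(boundary)) (hunit_sq g ;; q2) ltac:(boundary).

Lemma restriction_factor_src t Hs Ht : sq_src (restriction_factor t Hs Ht) = g.
Proof. unfold restriction_factor. boundary. Qed.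

Lemma restriction_factor_tgt t Hs Ht : sq_tgt (restriction_factor t Hs Ht) = g.
Proof. unfold restriction_factor. boundary. Qed.

Lemma restriction_factorK t Hs Ht : restriction_factor t Hs Ht ;; restriction_sq N = t.
Proof.
  unfold restriction_factor, restriction_sq. rewrite !sq_comp_assoc.
  sq_rewrite (sq_comp_prefix2 _ _ _ _ (eq_sym (hcomp_sq3_comp _ _ _ _ _ _ _ _ _ _ _ _))).
  assert (Hp' : (hunit_sq g ;; p2) ;; p1 = hunit_sq (comp g f)).
  { rewrite sq_comp_assoc, companion_vert. symmetry. apply hunit_sq_comp. }
  assert (Hq' : (hunit_sq g ;; q2) ;; q1 = hunit_sq (comp g f)).
  { rewrite sq_comp_assoc, conjoint_vert. symmetry. apply hunit_sq_comp. }
  sq_rewrite (hcomp_sq_congr _ _ _ _ _ _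
                (hcomp_sq_congr _ _ _ _ _ _ Hp' (sq_comp_id_r _ _ _ _ _ _ _ t)) Hq').
  apply (unitors_conj_hunit_sq t (comp g f) Hs Ht).
Qed.

Lemma restriction_factor_comp {M : HC A A} (th : Sq L M) (s : Sq M N)
  (Hths : sq_src th = g) (Htht : sq_tgt th = g) Hs Ht e1 e2 :
  restriction_factor (th ;; s) Hs Ht
  = th ;; lunit_inv M ;; runit_inv (hcomp (hunit A) M) ;; hcomp_sq (hcomp_sq p2 s e1) q2 e2.
Proof.
  unfold restriction_factor.
  sq_rewrite hcomp_sq3_comp.
  sq_rewrite (sq_comp_prefix3 _ _ _ _ _ (unitors_inv_natural th g Hths Htht _ _)).
  rewrite !sq_comp_assoc. sq_congr.
Qed.

End RestrictionFactor.

Lemma companion_zigzag_lunit_assoc (N : HC B B) e1 e2 e3 :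
  hcomp_sq p2 (hcomp_sq (hcomp_sq p1 (sq_id N) e1 ;; lunit N) (sq_id fc) e2) e3
  = lunit (restriction N) ;; assoc fh N fc.
Proof.
  sq_rewrite (hcomp_sq_congr _ _ _ _ _ _ eq_refl (lunit_absorb_assoc p1 N fc _ _ _)).
  sq_rewrite hcomp_sq_comp_r'.
  sq_rewrite companion_zigzag_lunit.
  sq_rewrite lunit_natural_id.
Qed.

(* The left side is the factorization of [restriction_sq N] through itself. *)
Lemma restriction_sq_transpose (N : HC B B) e1 e2 :
  lunit_inv (restriction N) ;; runit_inv (hcomp (hunit A) (restriction N)) ;;
  hcomp_sq (hcomp_sq p2 (restriction_sq N) e1) q2 e2 = sq_id (restriction N).
Proof.
  unfold restriction_sq.
  sq_rewrite (hcomp_sq_congr _ _ _ _ _ _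
                (hcomp_sq_congr _ _ _ _ _ _ eq_refl (unitors_absorb_split N p1 q1 _ _ _ _ _)) eq_refl).
  sq_rewrite hcomp_sq3_comp_mid.
  sq_rewrite (hcomp_sq_congr _ _ _ _ _ _ (companion_zigzag_lunit_assoc N _ _ _) eq_refl).
  sq_rewrite hcomp_sq_comp_l.
  sq_rewrite (hcomp_sq_congr _ _ _ _ _ _ (runit_absorb_assoc fh N q1 _ _ _) eq_refl).
  sq_rewrite hcomp_sq_comp_l'.
  sq_rewrite conjoint_zigzag_runit.
  rewrite !sq_comp_assoc.
  sq_rewrite (sq_comp_prefix2 _ _ _ _ (runit_inv_natural_id _ _ _)).
  rewrite !sq_comp_assoc, lunit_invK.
  sq_rewrite (sq_comp_prefix2 _ _ _ _ (eq_sym (hcomp_sq_comp _ _ _ _ _ _ _ _ _ _ _ _ _ _ _ _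
                                                  _ _ _ _ _ _ _))).
  sq_rewrite (hcomp_sq_congr _ _ _ _ _ _ (assoc_iso1 _ _ _ _ _ _ _ _) (sq_comp_id_l _ _ _ _ _ _ _ _)).
  rewrite hcomp_sq_id, sq_comp_id_l.
  apply runit_iso2.
Qed.

Lemma restriction_factor_unique {C : obj (D0 D)} {L : HC C C} {N : HC B B} (g : hom (D0 D) C A)
  (t : Sq L N) Hs Ht (th : Sq L (restriction N)) (Hths : sq_src th = g) (Htht : sq_tgt th = g) :
  th ;; restriction_sq N = t -> th = restriction_factor g t Hs Ht.
Proof.
  intros <-.
  sq_rewrite (restriction_factor_comp g th (restriction_sq N) Hths Htht).
  sq_rewrite restriction_sq_transpose.
  symmetry. apply sq_comp_id_r.
Qed.

Definition restriction_hom (N : HC B B) :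
  hom (Endo D) (existT (fun X => HC X X) A (restriction N)) (existT (fun X => HC X X) B N) :=
  exist _ (restriction_sq N) (eq_trans (restriction_sq_src N) (eq_sym (restriction_sq_tgt N))).

Lemma restriction_hom_cartesian (N : HC B B) : is_cartesian (endo_proj D) (restriction_hom N).
Proof.
  intros [C L] [t Ht] g Hg; cbn in g, Hg, t, Ht.
  rewrite restriction_sq_src in Hg.
  assert (Hts : sq_src t = comp g f) by congruence.
  assert (Htt : sq_tgt t = comp g f) by congruence.
  exists (exist _ (restriction_factor g t Hts Htt)
            (eq_trans (restriction_factor_src g t Hts Htt)
                      (eq_sym (restriction_factor_tgt g t Hts Htt)))).
  split; [split |].
  - apply restriction_factor_src.
  - apply endo_hom_eq, restriction_factorK.
  - intros [th Hth] [Hths Hcomp]; cbn in th, Hth, Hths.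
    apply (f_equal (@proj1_sig _ _)) in Hcomp; cbn in Hcomp.
    apply endo_hom_eq; cbn.
    symmetry. apply restriction_factor_unique; congruence.
Qed.

Lemma restriction_cartesian_lift (N : HC B B) :
  exists (x : obj (Endo D)) (s : hom (Endo D) x (existT (fun X => HC X X) B N))
    (e : Fob (endo_proj D) x = A),
    is_cartesian (endo_proj D) s /\
    match e in _ = a return hom (D0 D) a B with eq_refl => Fhom (endo_proj D) s end = f.
Proof.
  exists _, (restriction_hom N), eq_refl.
  split; [apply restriction_hom_cartesian | apply restriction_sq_src].
Qed.

(** * Extensions are opcartesian *)

Local Notation extension M := (hcomp (hcomp fc M) fh).

Definition extension_sq (M : HC A A) : Sq M (extension M) :=
  lunit_inv M ;; runit_inv (hcomp (hunit A) M) ;;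
  hcomp_sq (hcomp_sq q2 (sq_id M) ltac:(boundary)) p2 ltac:(boundary).

Lemma extension_sq_src (M : HC A A) : sq_src (extension_sq M) = f.
Proof. unfold extension_sq. boundary. Qed.

Lemma extension_sq_tgt (M : HC A A) : sq_tgt (extension_sq M) = f.
Proof. unfold extension_sq. boundary. Qed.

#[local] Hint Rewrite extension_sq_src extension_sq_tgt : sq_boundary.

Section ExtensionFactor.
Context {C : obj (D0 D)} {L : HC C C} {M : HC A A} (g : hom (D0 D) B C).

Definition extension_factor (t : Sq M L) (Hs : sq_src t = comp f g) (Ht : sq_tgt t = comp f g) :
  Sq (extension M) L :=
  hcomp_sq (hcomp_sq (q1 ;; hunit_sq g) t ltac:(boundary)) (p1 ;; hunit_sq g) ltac:(boundary)
  ;; runit (hcomp (hunit C) L) ;; lunit L.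

Lemma extension_factor_src t Hs Ht : sq_src (extension_factor t Hs Ht) = g.
Proof. unfold extension_factor. boundary. Qed.

Lemma extension_factor_tgt t Hs Ht : sq_tgt (extension_factor t Hs Ht) = g.
Proof. unfold extension_factor. boundary. Qed.

Lemma extension_sq_factor t Hs Ht : extension_sq M ;; extension_factor t Hs Ht = t.
Proof.
  unfold extension_sq, extension_factor. rewrite !sq_comp_assoc.
  sq_rewrite (sq_comp_prefix2 _ _ _ _ (eq_sym (hcomp_sq3_comp _ _ _ _ _ _ _ _ _ _ _ _))).
  assert (Hq' : q2 ;; q1 ;; hunit_sq g = hunit_sq (comp f g)).
  { rewrite <- sq_comp_assoc, conjoint_vert. symmetry. apply hunit_sq_comp. }
  assert (Hp' : p2 ;; p1 ;; hunit_sq g = hunit_sq (comp f g)).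
  { rewrite <- sq_comp_assoc, companion_vert. symmetry. apply hunit_sq_comp. }
  sq_rewrite (hcomp_sq_congr _ _ _ _ _ _
                (hcomp_sq_congr _ _ _ _ _ _ Hq' (sq_comp_id_l _ _ _ _ _ _ _ t)) Hp').
  apply (unitors_conj_hunit_sq t (comp f g) Hs Ht).
Qed.

Lemma extension_factor_comp {M' : HC B B} (s : Sq M M') (th : Sq M' L)
  (Hths : sq_src th = g) (Htht : sq_tgt th = g) Hs Ht e1 e2 :
  extension_factor (s ;; th) Hs Ht
  = hcomp_sq (hcomp_sq q1 s e1) p1 e2 ;; runit (hcomp (hunit B) M') ;; lunit M' ;; th.
Proof.
  unfold extension_factor.
  sq_rewrite hcomp_sq3_comp.
  rewrite !sq_comp_assoc.
  sq_rewrite (unitors_natural th g Hths Htht).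
Qed.

End ExtensionFactor.

(* The left side is the factorization of [extension_sq M] through itself. *)
Lemma extension_sq_transpose (M : HC A A) e1 e2 :
  hcomp_sq (hcomp_sq q1 (extension_sq M) e1) p1 e2 ;;
  runit (hcomp (hunit B) (extension M)) ;; lunit (extension M) = sq_id (extension M).
Proof.
  unfold extension_sq.
  sq_rewrite (hcomp_sq_congr _ _ _ _ _ _
                (hcomp_sq_congr _ _ _ _ _ _ eq_refl (unitors_inv_absorb_split M q2 p2 _ _ _ _)) eq_refl).
  sq_rewrite hcomp_sq3_comp_mid.
  sq_rewrite (hcomp_sq_congr _ _ _ _ _ _ (conjoint_zigzag_lunit_inv _ _ _) eq_refl).
  sq_rewrite (hcomp_sq_assoc (sq_id (hunit B)) _ p1).
  sq_rewrite (hcomp_sq_congr _ _ _ _ _ _ eq_refl (companion_zigzag_runit_inv _ _ _)).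
  rewrite !sq_comp_assoc.
  sq_rewrite (sq_comp_prefix2 _ _ _ _ (lunit_inv_assoc _ _ _)).
  sq_rewrite (sq_comp_prefix2 _ _ _ _ (assoc_inv_runit _ _ _)).
  sq_rewrite (sq_comp_prefix2 _ _ _ _ (hcomp_sq_id_l_inverse _ _ _ _ _ (runit_iso2 _ _ _ _))).
  rewrite sq_comp_id_l.
  apply lunit_iso2.
Qed.

Lemma extension_factor_unique {C : obj (D0 D)} {L : HC C C} {M : HC A A} (g : hom (D0 D) B C)
  (t : Sq M L) Hs Ht (th : Sq (extension M) L) (Hths : sq_src th = g) (Htht : sq_tgt th = g) :
  extension_sq M ;; th = t -> th = extension_factor g t Hs Ht.
Proof.
  intros <-.
  sq_rewrite (extension_factor_comp g (extension_sq M) th Hths Htht).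
  sq_rewrite (sq_comp_prefix3 _ _ _ _ _ (extension_sq_transpose M _ _)).
  symmetry. apply sq_comp_id_l.
Qed.

Definition extension_hom (M : HC A A) :
  hom (Endo D) (existT (fun X => HC X X) A M) (existT (fun X => HC X X) B (extension M)) :=
  exist _ (extension_sq M) (eq_trans (extension_sq_src M) (eq_sym (extension_sq_tgt M))).

Lemma extension_hom_opcartesian (M : HC A A) : is_opcartesian (endo_proj D) (extension_hom M).
Proof.
  intros [C L] [t Ht] g Hg; cbn in g, Hg, t, Ht.
  rewrite extension_sq_src in Hg.
  assert (Hts : sq_src t = comp f g) by congruence.
  assert (Htt : sq_tgt t = comp f g) by congruence.
  exists (exist _ (extension_factor g t Hts Htt)
            (eq_trans (extension_factor_src g t Hts Htt)
                      (eq_sym (extension_factor_tgt g t Hts Htt)))).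
  split; [split |].
  - apply extension_factor_src.
  - apply endo_hom_eq, extension_sq_factor.
  - intros [th Hth] [Hths Hcomp]; cbn in th, Hth, Hths.
    apply (f_equal (@proj1_sig _ _)) in Hcomp; cbn in Hcomp.
    apply endo_hom_eq; cbn.
    symmetry. apply extension_factor_unique; congruence.
Qed.

Lemma extension_opcartesian_lift (M : HC A A) :
  exists (y : obj (Endo D)) (s : hom (Endo D) (existT (fun X => HC X X) A M) y)
    (e : Fob (endo_proj D) y = B),
    is_opcartesian (endo_proj D) s /\
    match e in _ = b return hom (D0 D) A b with eq_refl => Fhom (endo_proj D) s end = f.
Proof.
  exists _, (extension_hom M), eq_refl.
  split; [apply extension_hom_opcartesian | apply extension_sq_src].
Qed.

End Lifts.

Theorem proposition3p15 (D : PDC) :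
  fibrant D -> is_bifibration (endo_proj D).
Proof.
  intros Hfib; split.
  - intros [B N] A f.
    destruct (Hfib A B f) as [[fh [p1 [p2 Hp]]] [fc [q1 [q2 Hq]]]].
    exact (restriction_cartesian_lift Hp Hq N).
  - intros [A M] B f.
    destruct (Hfib A B f) as [[fh [p1 [p2 Hp]]] [fc [q1 [q2 Hq]]]].
    exact (extension_opcartesian_lift Hp Hq M).
Qed.
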